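(* Let $r$, $s$, $c$, $d$ and $a_n$ be any integers with $r\neq0$, and assume $p^2-4q\neq0$ and that $V_d$, $V_{r+d}$, $U_r$ are nonzero. If $n$ is a positive even integer, then \[ \begin{split} &\sum_{a_{n-1}=c}^{a_n}\sum_{a_{n-2}=c}^{a_{n-1}}\cdots\sum_{a_0=c}^{a_1}\left(\frac{V_d}{V_{r+d}}\right)^{a_0}W_{ra_0+s} =\frac{1}{q^{dn}\Delta^n}\left(\frac{V_d}{U_r}\right)^n\left(\frac{V_d}{V_{r+d}}\right)^{a_n}W_{r(n+a_n)+dn+s}\\ &\quad-\left(\frac{V_d}{V_{r+d}}\right)^{c-1}\frac{1}{\Delta^n}\sum_{j=0}^{(n-2)/2}\frac{\Delta^{2j}}{q^{d(n-2j)}}\left(\frac{V_d}{U_r}\right)^{n-2j}W_{(r+d)(n-2j)+r(c-1)+s}\binom{a_n+2j-c}{2j}\\ &\quad-\left(\frac{V_d}{V_{r+d}}\right)^{c-1}\frac{1}{\Delta^{n+2}}\sum_{j=1}^{n/2}\frac{\Delta^{2j}}{q^{d(n-2j+1)}}\left(\frac{V_d}{U_r}\right)^{n-2j+1}\Big(W_{(r+d)(n-2j+1)+r(c-1)+s+1}-qW_{(r+d)(n-2j+1)+r(c-1)+s-1}\Big)\binom{a_n+2j-1-c}{2j-1}, \end{split} \] while if $n$ is a positive odd integer, then \[ \begin{split} &\sum_{a_{n-1}=c}^{a_n}\sum_{a_{n-2}=c}^{a_{n-1}}\cdots\sum_{a_0=c}^{a_1}\left(\frac{V_d}{V_{r+d}}\right)^{a_0}W_{ra_0+s}\\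 &=\frac{1}{q^{dn}\Delta^{n+1}}\left(\frac{V_d}{U_r}\right)^n\left(\frac{V_d}{V_{r+d}}\right)^{a_n}\Big(W_{r(n+a_n)+dn+s+1}-qW_{r(n+a_n)+dn+s-1}\Big)\\ &\quad-\left(\frac{V_d}{V_{r+d}}\right)^{c-1}\frac{1}{\Delta^{n+1}}\sum_{j=0}^{(n-1)/2}\frac{\Delta^{2j}}{q^{d(n-2j)}}\left(\frac{V_d}{U_r}\right)^{n-2j}\Big(W_{(r+d)(n-2j)+r(c-1)+s+1}-qW_{(r+d)(n-2j)+r(c-1)+s-1}\Big)\binom{a_n+2j-c}{2j}\\ &\quad-\left(\frac{V_d}{V_{r+d}}\right)^{c-1}\frac{1}{\Delta^{n+1}}\sum_{j=1}^{(n-1)/2}\frac{\Delta^{2j}}{q^{d(n-2j+1)}}\left(\frac{V_d}{U_r}\right)^{n-2j+1}W_{(r+d)(n-2j+1)+r(c-1)+s}\binom{a_n+2j-1-c}{2j-1}. \end{split} \]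
   Context: Let $a,b,p,q$ be complex numbers with $p\neq0$, $q\neq0$. The Horadam sequence $W_j=W_j(a,b;p,q)$ is defined by $W_0=a$, $W_1=b$, $W_j=pW_{j-1}-qW_{j-2}$ for $j\ge2$, and extended to negative indices by $W_{-m}=(pW_{-m+1}-W_{-m+2})/q$, so the recurrence holds for all integers. $U_j=W_j(0,1;p,q)$ and $V_j=W_j(2,p;p,q)$ are the Lucas sequences of the first and second kinds. $\Delta=\sqrt{p^2-4q}$ (only even powers of $\Delta$ occur, so the choice of square root is immaterial). For integers $c,m$ and a function $f$ on the integers, $\sum_{k=c}^m f(k)$ denotes the usual sum if $m\ge c$, equals $0$ if $m=c-1$, and equals $-\sum_{k=m+1}^{c-1}f(k)$ if $m\le c-2$. The nested sum $\sum_{a_{n-1}=c}^{a_n}\cdots\sum_{a_0=c}^{a_1}g(a_0)$ is the iterated sum with $n$ summation signs: innermost over $a_0$ from $c$ to $a_1$, then $a_1$ from $c$ to $a_2$, ..., outermost $a_{n-1}$ from $c$ to $a_n$. For an integer $j\ge0$ and any number $y$, $\binom{y}{j}=y(y-1)\cdots(y-j+1)/j!$. An empty sum (e.g. $\sum_{j=1}^{0}$) is $0$. *)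

From mathcomp Require Import all_boot all_order all_algebra.
From mathcomp Require Import reals Rstruct complex.
Set Implicit Arguments. Unset Strict Implicit. Unset Printing Implicit Defensive.
Import Order.TTheory GRing.Theory Num.Theory.
Local Open Scope ring_scope.

Notation C := (Rdefinitions.R)[i].

(* Horadam sequence W_j(a,b;p,q), j integer.
   Wpos a b p q n = (W_n, W_{n+1});  Wneg a b p q m = (W_{-m}, W_{-m+1}). *)
Fixpoint Wpos (a b p q : C) (n : nat) : C * C :=
  match n with
  | 0 => (a, b)
  | n'.+1 => let: (x, y) := Wpos a b p q n' in (y, p * y - q * x)
  end.

Fixpoint Wneg (a b p q : C) (m : nat) : C * C :=
  match m with
  | 0 => (a, b)
  | m'.+1 => let: (x, y) := Wneg a b p q m' in ((p * x - y) / q, x)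
  end.

Definition W (a b p q : C) (j : int) : C :=
  match j with
  | Posz n => (Wpos a b p q n).1
  | Negz m => (Wneg a b p q m.+1).1   (* Negz m = -(m+1) *)
  end.

Definition U (p q : C) (j : int) : C := W 0 1 p q j.
Definition V (p q : C) (j : int) : C := W 2 p p q j.

Definition gsum (c m : int) (f : int -> C) : C :=
  if Order.le c m then \sum_(k < absz (m - c + 1)%R) f (c + k%:Z)
  else - \sum_(k < absz (c - 1 - m)%R) f (m + 1 + k%:Z).

(* Nested sum with n summation signs, all lower limits c, evaluated at
   the outer upper limit x:  nsum 0 c g x = g x,
   nsum (n+1) c g x = \sum_{a=c}^{x} nsum n c g a. *)
Fixpoint nsum (n : nat) (c : int) (g : int -> C) (x : int) : C :=
  match n with
  | 0 => g x
  | n'.+1 => gsum c x (nsum n' c g)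
  end.

Definition binomC (y : C) (j : nat) : C :=
  (\prod_(i < j) (y - i%:R)) / (j`!)%:R.

From Pilot Require Import Defs.
From mathcomp Require Import all_boot all_order all_algebra.
From mathcomp Require Import reals Rstruct complex.
From mathcomp Require Import ring zify.
Set Implicit Arguments. Unset Strict Implicit. Unset Printing Implicit Defensive.
Import Order.TTheory GRing.Theory Num.Theory.
Local Open Scope ring_scope.

(* Let al, be be the roots of X^2 - pX + q, so that al - be = Delta. Binet's formula
   W_j = (A al^j - B be^j) / Delta turns the summand x^k W_(rk+s) into a combination of
   the geometric sequences z^k with z = x al^r and z = x be^r. The n-fold nested sum of
   z^k from c is z^m w^n - z^(c-1) sum_(i<n) w^(n-i) binom(m+i-c, i) as soon as
   w (z - 1) = z, and the choice x = V_d / V_(r+d) makes w = al^(r+d) y / (q^d Delta),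
   resp. be^(r+d) y / (q^d (-Delta)), with y = V_d / U_r. Recombining the two roots
   gives back W_e when the power of w is even and (W_(e+1) - q W_(e-1)) / Delta when it
   is odd, whence the split of the formula according to parities. *)

Section NestedHoradamSums.

Variable R : numFieldType.

(* The definitions of [Defs] over an arbitrary numeric field: over [C] they are the
   original ones up to conversion (see [W_horadam] and its siblings), and [ring] and
   [field] are much faster on an abstract field than on [C]. *)
Fixpoint horadam_pos (a b p q : R) (n : nat) : R * R :=
  match n with
  | 0 => (a, b)
  | n'.+1 => let: (x, y) := horadam_pos a b p q n' in (y, p * y - q * x)
  end.

Fixpoint horadam_neg (a b p q : R) (m : nat) : R * R :=
  match m with
  | 0 => (a, b)
  | m'.+1 => let: (x, y) := horadam_neg a b p q m' in ((p * x - y) / q, x)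
  end.

Definition horadam (a b p q : R) (j : int) : R :=
  match j with
  | Posz n => (horadam_pos a b p q n).1
  | Negz m => (horadam_neg a b p q m.+1).1
  end.

Definition lucasU (p q : R) (j : int) : R := horadam 0 1 p q j.
Definition lucasV (p q : R) (j : int) : R := horadam 2 p p q j.

Definition signed_sum (c m : int) (f : int -> R) : R :=
  if Order.le c m then \sum_(k < absz (m - c + 1)%R) f (c + k%:Z)
  else - \sum_(k < absz (c - 1 - m)%R) f (m + 1 + k%:Z).

Fixpoint nested_sum (n : nat) (c : int) (g : int -> R) (x : int) : R :=
  match n with
  | 0 => g x
  | n'.+1 => signed_sum c x (nested_sum n' c g)
  end.

Definition gbinom (y : R) (j : nat) : R := (\prod_(i < j) (y - i%:R)) / (j`!)%:R.

Lemma telescope_int (F f : int -> R) (e : int) (N : nat) :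
  (forall k, F k - F (k - 1) = f k) ->
  \sum_(k < N) f (e + k%:Z) = F (e + N%:Z - 1) - F (e - 1).
Proof.
move=> dF; elim: N => [|N IH]; first by rewrite big_ord0 addr0 subrr.
rewrite big_ord_recr /= IH -dF -addn1 PoszD.
have -> : e + (N%:Z + 1) - 1 = e + N%:Z by ring.
by ring.
Qed.

Lemma signed_sum_telescope (F f : int -> R) (c : int) :
  F (c - 1) = 0 -> (forall k, F k - F (k - 1) = f k) ->
  forall m, signed_sum c m f = F m.
Proof.
move=> Fc dF m; rewrite /signed_sum !(telescope_int _ _ dF); case: ifP => cm.
  rewrite gez0_abs; last by lia.
  by rewrite Fc subr0; congr F; ring.
rewrite gez0_abs; last by lia.
have -> : m + 1 + (c - 1 - m)%R - 1 = c - 1 by ring.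
by rewrite Fc sub0r opprK; congr F; ring.
Qed.

Lemma signed_sum_lin (c m : int) (f g h : int -> R) (u v : R) :
  (forall k, f k = u * g k + v * h k) ->
  signed_sum c m f = u * signed_sum c m g + v * signed_sum c m h.
Proof.
move=> fE; rewrite /signed_sum; case: ifP => _; rewrite ?mulrN -?opprD !mulr_sumr -big_split;
  [|congr (- _)]; by apply: eq_bigr => k _.
Qed.

Lemma nested_sum_lin (n : nat) (c m : int) (f g h : int -> R) (u v : R) :
  (forall k, f k = u * g k + v * h k) ->
  nested_sum n c f m = u * nested_sum n c g m + v * nested_sum n c h m.
Proof. by elim: n m => [|n IH] m fE /=; [apply: fE | apply: signed_sum_lin => k; apply: IH]. Qed.

Lemma nested_sum_telescope (F : nat -> int -> R) (c : int) (g : int -> R) :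
  (forall k, F 0%N k = g k) ->
  (forall n, F n.+1 (c - 1) = 0) ->
  (forall n k, F n.+1 k - F n.+1 (k - 1) = F n k) ->
  forall n m, nested_sum n c g m = F n m.
Proof.
move=> F0 Fc dF; elim=> [|n IH] m /=; first by rewrite F0.
rewrite -(signed_sum_telescope (Fc n) (dF n) m) /signed_sum.
by case: ifP => _; [|congr (- _)]; apply: eq_bigr => k _.
Qed.

Lemma gbinom0 (y : R) : gbinom y 0 = 1.
Proof. by rewrite /gbinom big_ord0 fact0 divr1. Qed.

Lemma gbinom_small (i : nat) : gbinom i%:R i.+1 = 0.
Proof. by rewrite /gbinom big_ord_recr /= subrr mulr0 mul0r. Qed.

Lemma gbinom_pascal (y : R) (i : nat) :
  gbinom y i.+1 - gbinom (y - 1) i.+1 = gbinom (y - 1) i.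
Proof.
rewrite /gbinom big_ord_recl big_ord_recr /= subr0.
under eq_bigr => k _ do rewrite /bump /= add1n -addn1 natrD mulr1n opprD addrA addrAC.
have fact_neq0 : (i`!)%:R != 0 :> R by rewrite pnatr_eq0 -lt0n fact_gt0.
have Si_neq0 : 1 + i%:R != 0 :> R by rewrite addrC natr1 pnatr_eq0.
rewrite factS natrM; move: (\prod_(_ < i) _) => P.
by field; rewrite fact_neq0 Si_neq0.
Qed.

Lemma nested_sum_geometric (z w : R) (c : int) (n : nat) (m : int) :
  z != 0 -> w * (z - 1) = z ->
  nested_sum n c (fun k => z ^ k) m
  = z ^ m * w ^+ n - z ^ (c - 1) * \sum_(i < n) w ^+ (n - i) * gbinom (m + i%:Z - c)%:~R i.
Proof.
move=> z0 wz; move: n m; apply: nested_sum_telescope => [k | n | n k].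
- by rewrite big_ord0 expr0 mulr1 mulr0 subr0.
- rewrite big_ord_recl /= gbinom0 subn0 mulr1 big1 ?addr0 ?subrr // => i _.
  have -> : c - 1 + (bump 0 i)%:Z - c = i%:Z by rewrite /bump /= add1n -addn1 PoszD; ring.
  by rewrite gbinom_small mulr0.
- have pascal : \sum_(i < n.+1) w ^+ (n.+1 - i) * gbinom (k + i%:Z - c)%:~R i
      - \sum_(i < n.+1) w ^+ (n.+1 - i) * gbinom (k - 1 + i%:Z - c)%:~R i
      = \sum_(i < n) w ^+ (n - i) * gbinom (k + i%:Z - c)%:~R i.
    rewrite -sumrB big_ord_recl /= !gbinom0 subrr add0r.
    apply: eq_bigr => i _; rewrite /bump /= add1n subSS -mulrBr.
    have -> : (k - 1 + i.+1%:Z - c)%:~R = (k + i.+1%:Z - c)%:~R - 1 :> R.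
      by rewrite -[1]/(1%:~R) -intrB; congr (_%:~R); ring.
    rewrite gbinom_pascal -[1]/(1%:~R) -intrB; congr (_ * gbinom _%:~R _).
    by rewrite -addn1 PoszD; ring.
  have zk : z ^ k = z ^ (k - 1) * z by rewrite -[in LHS](subrK 1 k) expfzDr // expr1z.
  rewrite -pascal zk; apply/eqP; rewrite -subr_eq0; apply/eqP.
  transitivity (z ^ (k - 1) * w ^+ n * (w * (z - 1) - z)); first by rewrite exprS; ring.
  by rewrite wz subrr mulr0.
Qed.

Lemma sum_parity_split (M : nmodType) (f : nat -> M) (n : nat) :
  \sum_(i < n) f i = \sum_(0 <= j < n./2 + odd n) f (2 * j)%N
                     + \sum_(1 <= j < n./2 + 1) f (2 * j - 1)%N.
Proof.
elim: n => [|n IH]; first by rewrite big_ord0 !big_geq ?addr0.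
have n_eq := odd_double_half n.
rewrite big_ord_recr /= IH uphalf_half; case: (odd n) n_eq => /= n_eq.
- rewrite add1n addn0 !addn1 [X in _ = _ + X]big_nat_recr // addrA.
  by congr (_ + f _); lia.
- rewrite addn0 !addn1 [X in _ = X + _]big_nat_recr // [RHS]addrAC.
  by congr (_ + f _); lia.
Qed.

Lemma horadam_rec_unique (a b p q : R) (f : int -> R) : q != 0 ->
  f 0 = a -> f 1 = b -> (forall j, f (j + 2) = p * f (j + 1) - q * f j) ->
  forall j, horadam a b p q j = f j.
Proof.
move=> q0 f0 f1 rec.
have pos n : horadam_pos a b p q n = (f n, f (n%:Z + 1)).
  elim: n => [|n /= ->]; first by rewrite f0 add0r f1.
  by rewrite -addn1 PoszD -addrA rec.
have neg m : horadam_neg a b p q m = (f (- m%:Z), f (- m%:Z + 1)).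
  elim: m => [|m /= ->]; first by rewrite oppr0 f0 add0r f1.
  have -> : - m.+1%:Z = - m%:Z - 1 by rewrite -addn1 PoszD opprD.
  have := rec (- m%:Z - 1); rewrite -addrA [- 1 + 2]addrC addrK subrK => ->.
  by congr (_, _); field.
by case=> n; rewrite /horadam ?pos ?neg ?NegzE.
Qed.

Definition quadratic_roots (p q Delta u v : R) :=
  [/\ u + v = p, u * v = q, u - v = Delta, q != 0 & Delta != 0].

Lemma exists_quadratic_roots (p q Delta : R) : q != 0 -> Delta != 0 ->
  Delta ^+ 2 = p ^+ 2 - 4 * q -> exists u v, quadratic_roots p q Delta u v.
Proof.
move=> q0 Delta0 Delta_sq; exists ((p + Delta) / 2), ((p - Delta) / 2); split=> //.
- by field.
- have -> : q = (p ^+ 2 - Delta ^+ 2) / 4 by rewrite Delta_sq; field.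
  by field.
- by field.
Qed.

Lemma quadratic_roots_sym (p q Delta u v : R) :
  quadratic_roots p q Delta u v -> quadratic_roots p q (- Delta) v u.
Proof.
case=> sum prod diff q0 Delta0.
by split; rewrite ?oppr_eq0 // -?diff ?opprB // (addrC, mulrC).
Qed.

Lemma quadratic_roots_neq0 (p q Delta u v : R) : quadratic_roots p q Delta u v -> u != 0.
Proof. by case=> _ prod _ q0 _; apply: contraNneq q0 => u0; rewrite -prod u0 mul0r. Qed.

Section QuadraticRoots.

Variables (p q Delta u v : R).
Hypothesis roots : quadratic_roots p q Delta u v.

Let u0 := quadratic_roots_neq0 roots.
Let v0 := quadratic_roots_neq0 (quadratic_roots_sym roots).

Lemma horadam_binet (a b : R) (j : int) :
  horadam a b p q j = ((b - a * v) * u ^ j - (b - a * u) * v ^ j) / Delta.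
Proof.
case: roots => sum prod diff q0 Delta0; rewrite -diff in Delta0 *.
move: j; apply: horadam_rec_unique => //; rewrite ?expr0z ?expr1z.
- by field.
- by field.
by move=> j; rewrite !expfzDr // !expr1z -sum -prod; field.
Qed.

Lemma lucasV_binet (j : int) : lucasV p q j = u ^ j + v ^ j.
Proof.
case: roots => sum _ diff _ Delta0.
by rewrite /lucasV horadam_binet -sum -diff; field; rewrite diff.
Qed.

Lemma lucasU_binet (j : int) : lucasU p q j = (u ^ j - v ^ j) / Delta.
Proof. by rewrite /lucasU horadam_binet; case: roots => *; field. Qed.

Lemma horadam_diff_binet (a b : R) (e : int) :
  horadam a b p q (e + 1) - q * horadam a b p q (e - 1)
  = (b - a * v) * u ^ e + (b - a * u) * v ^ e.
Proof.
rewrite !horadam_binet !expfzDr // -!invr_expz !expr1z.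
case: roots => _ prod diff _ Delta0; rewrite -prod -diff in Delta0 *.
by field; rewrite Delta0 u0 v0.
Qed.

Lemma geometric_ratio (r d : int) :
  lucasV p q (r + d) != 0 -> lucasU p q r != 0 ->
  let x := lucasV p q d / lucasV p q (r + d) in
  u ^ (r + d) * (lucasV p q d / lucasU p q r) / (q ^ d * Delta) * (x * u ^ r - 1) = x * u ^ r.
Proof.
move=> + + x; rewrite /x !lucasV_binet !lucasU_binet.
case: roots => _ prod _ _ Delta0; rewrite -prod expfzMl !expfzDr //.
have ud0 : u ^ d != 0 by rewrite expfz_neq0.
have vd0 : v ^ d != 0 by rewrite expfz_neq0.
move: (u ^ r) (v ^ r) (u ^ d) (v ^ d) ud0 vd0 => ur vr ud vd ud0 vd0 Vrd0 Ur0.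
have urvr : ur - vr != 0 by apply: contraNneq Ur0 => ->; rewrite mul0r.
by field; rewrite Vrd0 Delta0 ud0 vd0 urvr.
Qed.

End QuadraticRoots.

Lemma root_power_split (u x y Q E : R) (r d s M : int) (k : nat) :
  u != 0 ->
  u ^ s * (x * u ^ r) ^ M * (u ^ (r + d) * y / (Q * E)) ^+ k
  = x ^ M * y ^+ k / Q ^+ k / E ^+ k * u ^ ((r + d) * k%:Z + r * M + s).
Proof.
move=> u0; rewrite [u ^ (_ + s)]expfzDr // [u ^ (_ + r * M)]expfzDr //.
by rewrite -!exprz_exp expfzMl !exprMn exprVn exprMn invfM -exprnP; ring.
Qed.

Section HoradamNestedSum.

Variables (a b p q Delta al be : R) (r s c d : int).
Hypotheses (roots : quadratic_roots p q Delta al be)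
  (Vd0 : lucasV p q d != 0) (Vrd0 : lucasV p q (r + d) != 0) (Ur0 : lucasU p q r != 0).

Let roots' := quadratic_roots_sym roots.
Let al0 := quadratic_roots_neq0 roots.
Let be0 := quadratic_roots_neq0 roots'.

Let q_neq0 : q != 0. Proof. by case: roots. Qed.
Let Delta_neq0 : Delta != 0. Proof. by case: roots. Qed.

Let A := b - a * be.
Let B := b - a * al.

Lemma horadam_roots j : horadam a b p q j = (A * al ^ j - B * be ^ j) / Delta.
Proof. exact: horadam_binet. Qed.

Lemma horadam_diff_roots e :
  horadam a b p q (e + 1) - q * horadam a b p q (e - 1) = A * al ^ e + B * be ^ e.
Proof. exact: (horadam_diff_binet roots). Qed.

Let x := lucasV p q d / lucasV p q (r + d).
Let y := lucasV p q d / lucasU p q r.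
Let ratio u D := u ^ (r + d) * y / (q ^ d * D).

Lemma x_root_neq0 u : u != 0 -> x * u ^ r != 0.
Proof. by move=> u0; rewrite !mulf_neq0 ?invr_eq0 ?expfz_neq0. Qed.

Lemma ratio_al : ratio al Delta * (x * al ^ r - 1) = x * al ^ r.
Proof. exact: (geometric_ratio roots Vrd0 Ur0). Qed.

Lemma ratio_be : ratio be (- Delta) * (x * be ^ r - 1) = x * be ^ r.
Proof. exact: (geometric_ratio roots' Vrd0 Ur0). Qed.

Definition binet_term (k : nat) (M : int) : R :=
  (A * (al ^ s * (x * al ^ r) ^ M * ratio al Delta ^+ k)
   - B * (be ^ s * (x * be ^ r) ^ M * ratio be (- Delta) ^+ k)) / Delta.

Lemma nested_sum_binet (n : nat) (m : int) :
  nested_sum n c (fun k => x ^ k * horadam a b p q (r * k + s)) m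
  = binet_term n m - \sum_(i < n) gbinom (m + i%:Z - c)%:~R i * binet_term (n - i) (c - 1).
Proof.
have summand_roots k : x ^ k * horadam a b p q (r * k + s)
    = A * al ^ s / Delta * (x * al ^ r) ^ k + - (B * be ^ s / Delta) * (x * be ^ r) ^ k.
  by rewrite horadam_roots !(expfzMl x) !expfzDr ?al0 ?be0 // -!exprz_exp; ring.
have term_roots i : gbinom (m + i%:Z - c)%:~R i * binet_term (n - i) (c - 1)
    = A * al ^ s * (x * al ^ r) ^ (c - 1) / Delta
        * (ratio al Delta ^+ (n - i) * gbinom (m + i%:Z - c)%:~R i)
      - B * be ^ s * (x * be ^ r) ^ (c - 1) / Delta
        * (ratio be (- Delta) ^+ (n - i) * gbinom (m + i%:Z - c)%:~R i).
  by rewrite /binet_term; ring.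
under eq_bigr => i _ do rewrite term_roots.
rewrite (nested_sum_lin _ _ _ summand_roots) sumrB -!mulr_sumr.
rewrite (nested_sum_geometric _ _ _ (x_root_neq0 al0) ratio_al).
rewrite (nested_sum_geometric _ _ _ (x_root_neq0 be0) ratio_be) /binet_term.
by ring.
Qed.

Lemma binet_termE (k : nat) (M : int) :
  let e := (r + d) * k%:Z + r * M + s in
  x ^ M * y ^+ k / q ^ (d * k%:Z) / Delta ^+ k.+1 * (A * al ^ e - (-1) ^+ k * B * be ^ e)
  = binet_term k M.
Proof.
rewrite /binet_term /ratio !root_power_split ?al0 ?be0 // (exprNn Delta) invfM invr_sign.
by rewrite -exprz_exp -exprnP exprSr [(_ * Delta)^-1]invfM; ring.
Qed.

Lemma binet_term_W (k : nat) (M : int) : ~~ odd k ->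
  x ^ M * y ^+ k / q ^ (d * k%:Z) / Delta ^+ k * horadam a b p q ((r + d) * k%:Z + r * M + s)
  = binet_term k M.
Proof.
move=> even_k; rewrite -binet_termE horadam_roots -signr_odd (negbTE even_k) expr0 mul1r.
by rewrite exprSr [(_ * Delta)^-1]invfM; ring.
Qed.

Lemma binet_term_Wdiff (k : nat) (M : int) : odd k ->
  x ^ M * y ^+ k / q ^ (d * k%:Z) / Delta ^+ k.+1
    * (horadam a b p q ((r + d) * k%:Z + r * M + s + 1)
       - q * horadam a b p q ((r + d) * k%:Z + r * M + s - 1))
  = binet_term k M.
Proof. by move=> odd_k; rewrite -binet_termE horadam_diff_roots -signr_odd odd_k expr1; ring. Qed.

Lemma nested_sum_parity (n : nat) (m : int) :
  nested_sum n c (fun k => x ^ k * horadam a b p q (r * k + s)) m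
  = binet_term n m
    - \sum_(0 <= j < n./2 + odd n)
        gbinom (m + (2 * j)%N%:Z - c)%:~R (2 * j) * binet_term (n - 2 * j) (c - 1)
    - \sum_(1 <= j < n./2 + 1)
        gbinom (m + (2 * j - 1)%N%:Z - c)%:~R (2 * j - 1) * binet_term (n - (2 * j - 1)) (c - 1).
Proof.
rewrite nested_sum_binet.
by rewrite (sum_parity_split (fun i => gbinom (m + i%:Z - c)%:~R i * binet_term (n - i) (c - 1)))
  opprD addrA.
Qed.

Lemma leading_W (n : nat) (m : int) : ~~ odd n ->
  (q ^ (d * n%:Z))^-1 / Delta ^+ n * y ^+ n * x ^ m
    * horadam a b p q (r * (n%:Z + m) + d * n%:Z + s)
  = binet_term n m.
Proof.
move=> even_n; rewrite -(binet_term_W _ even_n).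
have -> : r * (n%:Z + m) + d * n%:Z + s = (r + d) * n%:Z + r * m + s by ring.
by ring.
Qed.

Lemma leading_Wdiff (n : nat) (m : int) : odd n ->
  (q ^ (d * n%:Z))^-1 / Delta ^+ (n + 1) * y ^+ n * x ^ m
    * (horadam a b p q (r * (n%:Z + m) + d * n%:Z + s + 1)
       - q * horadam a b p q (r * (n%:Z + m) + d * n%:Z + s - 1))
  = binet_term n m.
Proof.
move=> odd_n; rewrite -(binet_term_Wdiff _ odd_n) addn1.
have -> : r * (n%:Z + m) + d * n%:Z + s = (r + d) * n%:Z + r * m + s by ring.
by ring.
Qed.

Lemma summand_W (k i D : nat) (K : int) (Y : R) : ~~ odd k -> K = k%:Z -> D = (k + i)%N ->
  x ^ (c - 1) / Delta ^+ D
    * (Delta ^+ i / q ^ (d * K) * y ^ K * horadam a b p q ((r + d) * K + r * (c - 1) + s) * Y)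
  = Y * binet_term k (c - 1).
Proof.
move=> even_k -> ->; rewrite -(binet_term_W _ even_k) -exprnP exprD.
have Delta_i0 : Delta ^+ i != 0 by rewrite expf_neq0 ?Delta_neq0.
have Delta_k0 : Delta ^+ k != 0 by rewrite expf_neq0 ?Delta_neq0.
by field; rewrite Delta_i0 Delta_k0 expfz_neq0 // q_neq0.
Qed.

Lemma summand_Wdiff (k i D : nat) (K : int) (Y : R) : odd k -> K = k%:Z -> D = (k.+1 + i)%N ->
  x ^ (c - 1) / Delta ^+ D
    * (Delta ^+ i / q ^ (d * K) * y ^ K
       * (horadam a b p q ((r + d) * K + r * (c - 1) + s + 1)
          - q * horadam a b p q ((r + d) * K + r * (c - 1) + s - 1)) * Y)
  = Y * binet_term k (c - 1).
Proof.
move=> odd_k -> ->; rewrite -(binet_term_Wdiff _ odd_k) -exprnP exprD.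
have Delta_i0 : Delta ^+ i != 0 by rewrite expf_neq0 ?Delta_neq0.
have Delta_k0 : Delta ^+ k.+1 != 0 by rewrite expf_neq0 ?Delta_neq0.
by field; rewrite Delta_i0 Delta_k0 expfz_neq0 // q_neq0.
Qed.

End HoradamNestedSum.

End NestedHoradamSums.

Lemma W_horadam : W = @horadam C. Proof. by []. Qed.
Lemma U_lucasU : U = @lucasU C. Proof. by []. Qed.
Lemma V_lucasV : V = @lucasV C. Proof. by []. Qed.
Lemma nsum_nested_sum : nsum = @nested_sum C. Proof. by []. Qed.
Lemma binomC_gbinom : binomC = @gbinom C. Proof. by []. Qed.

Theorem theorem6 (a b p q Delta : C) (r s c d : int)
  (hp : p != 0) (hq : q != 0)
  (hDelta : Delta ^+ 2 = p ^+ 2 - 4 * q) (hdisc : p ^+ 2 - 4 * q != 0)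
  (hr : r != 0)
  (hVd : V p q d != 0) (hVrd : V p q (r + d) != 0) (hUr : U p q r != 0) :
  let Wf := W a b p q in
  let x := V p q d / V p q (r + d) in
  let y := V p q d / U p q r in
  (forall (n : nat) (an : int), (0 < n)%N -> ~~ odd n ->
     nsum n c (fun a0 => x ^ a0 * Wf (r * a0 + s)) an =
       (q ^ (d * n%:Z))^-1 / Delta ^+ n * y ^+ n * x ^ an
         * Wf (r * (n%:Z + an) + d * n%:Z + s)
     - x ^ (c - 1) / Delta ^+ n *
         \sum_(0 <= j < n./2)
           (Delta ^+ (2 * j) / q ^ (d * (n%:Z - 2 * j%:Z))
            * y ^ (n%:Z - 2 * j%:Z)
            * Wf ((r + d) * (n%:Z - 2 * j%:Z) + r * (c - 1) + s)
            * binomC (an + 2 * j%:Z - c)%:~R (2 * j))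
     - x ^ (c - 1) / Delta ^+ (n + 2) *
         \sum_(1 <= j < n./2 + 1)
           (Delta ^+ (2 * j) / q ^ (d * (n%:Z - 2 * j%:Z + 1))
            * y ^ (n%:Z - 2 * j%:Z + 1)
            * (Wf ((r + d) * (n%:Z - 2 * j%:Z + 1) + r * (c - 1) + s + 1)
               - q * Wf ((r + d) * (n%:Z - 2 * j%:Z + 1) + r * (c - 1) + s - 1))
            * binomC (an + 2 * j%:Z - 1 - c)%:~R (2 * j - 1)))
  /\
  (forall (n : nat) (an : int), odd n ->
     nsum n c (fun a0 => x ^ a0 * Wf (r * a0 + s)) an =
       (q ^ (d * n%:Z))^-1 / Delta ^+ (n + 1) * y ^+ n * x ^ an
         * (Wf (r * (n%:Z + an) + d * n%:Z + s + 1)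
            - q * Wf (r * (n%:Z + an) + d * n%:Z + s - 1))
     - x ^ (c - 1) / Delta ^+ (n + 1) *
         \sum_(0 <= j < n./2 + 1)
           (Delta ^+ (2 * j) / q ^ (d * (n%:Z - 2 * j%:Z))
            * y ^ (n%:Z - 2 * j%:Z)
            * (Wf ((r + d) * (n%:Z - 2 * j%:Z) + r * (c - 1) + s + 1)
               - q * Wf ((r + d) * (n%:Z - 2 * j%:Z) + r * (c - 1) + s - 1))
            * binomC (an + 2 * j%:Z - c)%:~R (2 * j))
     - x ^ (c - 1) / Delta ^+ (n + 1) *
         \sum_(1 <= j < n./2 + 1)
           (Delta ^+ (2 * j) / q ^ (d * (n%:Z - 2 * j%:Z + 1))
            * y ^ (n%:Z - 2 * j%:Z + 1)
            * Wf ((r + d) * (n%:Z - 2 * j%:Z + 1) + r * (c - 1) + s)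
            * binomC (an + 2 * j%:Z - 1 - c)%:~R (2 * j - 1))).
Proof.
move=> Wf x y.
rewrite {}/Wf {}/x {}/y W_horadam U_lucasU V_lucasV nsum_nested_sum binomC_gbinom.
have Delta0 : Delta != 0 by apply: contraNneq hdisc; rewrite -hDelta => ->; rewrite expr0n.
have [al [be roots]] := exists_quadratic_roots hq Delta0 hDelta.
have expand := nested_sum_parity a b s c roots hVd hVrd hUr.
have term_W := summand_W a b r s c d roots.
have term_Wdiff := summand_Wdiff a b r s c d roots.
split=> [n an _ even_n | n an odd_n]; rewrite expand.
- rewrite (leading_W a b r s d roots an even_n) (negbTE even_n) addn0.
  congr (_ - _ - _); rewrite mulr_sumr; apply: eq_big_nat => j /andP[j_ge j_lt].
  + rewrite (term_W (n - 2 * j)%N); try lia.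
    by congr (gbinom _%:~R _ * _); lia.
  + rewrite (term_Wdiff (n - (2 * j - 1))%N); try lia.
    by congr (gbinom _%:~R _ * _); lia.
- rewrite (leading_Wdiff a b r s d roots an odd_n) odd_n.
  congr (_ - _ - _); rewrite mulr_sumr; apply: eq_big_nat => j /andP[j_ge j_lt].
  + rewrite (term_Wdiff (n - 2 * j)%N); try lia.
    by congr (gbinom _%:~R _ * _); lia.
  + rewrite (term_W (n - (2 * j - 1))%N); try lia.
    by congr (gbinom _%:~R _ * _); lia.
Qed.
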